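(* Let $F:[n]^\ell\to\mathbb{R}$ be permutation-invariant. For every $i\in\{1,\dots,\ell\}$, $$\mathbb{E}_{X\in[n]^i}[f_{i,F}(X)^2]=\frac{\eta_i}{\binom{\ell}{i}},$$ and this identity is derivable in degree $2$ sum-of-squares from the permutation-invariance axioms $\{F(x_1,\dots,x_\ell)=F(x_{\pi(1)},\dots,x_{\pi(\ell)})\}$, treating the values $F(X)$ as indeterminates.
   Context: $[n]=\mathbb{Z}/n\mathbb{Z}$, $\chi_T(x)=\prod_j e^{2\pi iT_jx_j/n}$, $\hat F(T)=\mathbb{E}_Y[F(Y)\overline{\chi_T(Y)}]$, $|T|=|\{j:T_j\ne0\}|$. $F_i=\sum_{T:|T|=i}\hat F(T)\chi_T$ and $\eta_i=\mathbb{E}_X[F_i(X)^2]$. $f_{i,F}:[n]^i\to\mathbb{C}$ is $f_{i,F}(x_1,\dots,x_i)=\sum_{(T_1,\dots,T_i)\in([n]\setminus\{0\})^i}\hat F(T_1,\dots,T_i,0,\dots,0)\chi_{T_1,\dots,T_i}(x_1,\dots,x_i)$. $F$ is permutation-invariant if invariant under permuting its $\ell$ coordinates. *)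

From mathcomp Require Import all_boot all_order all_algebra all_fingroup.
From mathcomp Require Import complex.
From mathcomp Require Import reals trigo.
Set Implicit Arguments. Unset Strict Implicit. Unset Printing Implicit Defensive.
Import GRing.Theory Num.Theory.
Local Open Scope ring_scope.

Section Defs.
Variable R : realType.
Variables n l : nat.

(* points of [n]^m, with [n] = Z/nZ represented by 'I_n *)
Definition pt (m : nat) := {ffun 'I_m -> 'I_n}.

Definition omega : R[i] := (cos (2 * pi / n%:R) +i* sin (2 * pi / n%:R))%C.

Definition chi (m : nat) (T x : pt m) : R[i] :=
  \prod_(j < m) omega ^+ (nat_of_ord (T j) * nat_of_ord (x j))%N.

Definition avg (m : nat) (g : pt m -> R[i]) : R[i] :=
  (#|{: pt m}|%:R)^-1 * \sum_(Y : pt m) g Y.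

Definition fhat (F : pt l -> R) (T : pt l) : R[i] :=
  avg (fun Y => (F Y)%:C%C * (chi T Y)^*).

Definition wt (T : pt l) : nat := #|[set j | nat_of_ord (T j) != 0%N]|.

Definition Flevel (F : pt l -> R) (i : nat) (X : pt l) : R[i] :=
  \sum_(T : pt l | wt T == i) fhat F T * chi T X.

Definition eta (F : pt l -> R) (i : nat) : R[i] :=
  avg (fun X => (Flevel F i X) ^+ 2).

(* f_{i,F}(x_1..x_i) = sum over (T_1..T_i) in ([n]\{0})^i of
   \hat F(T_1,..,T_i,0,..,0) chi_{T_1..T_i}(x_1..x_i).
   The tuples (T_1,..,T_i,0,..,0) are exactly the T : [n]^l with
   T_j <> 0 iff j < i (0-based indices). *)
Definition fcoef (F : pt l -> R) (i : nat) (hil : (i <= l)%N) (x : pt i) : R[i] :=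
  \sum_(T : pt l | [forall j : 'I_l, (nat_of_ord j < i)%N == (nat_of_ord (T j) != 0%N)])
     fhat F T * \prod_(k < i) omega ^+ (nat_of_ord (T (widen_ord hil k)) * nat_of_ord (x k))%N.

Definition perm_pt (x : pt l) (s : 'S_l) : pt l := [ffun j => x (s j)].

Definition perm_invariant (F : pt l -> R) : Prop :=
  forall (x : pt l) (s : 'S_l), F x = F (perm_pt x s).

(* Degree-2 (sum-of-squares / ideal) derivability of the identity  P = 0,
   where P is a polynomial in the indeterminates G(x), x in [n]^l, from the
   degree-1 axioms G(x) - G(perm_pt x s) = 0: P is a combination of the axioms
   with multipliers of degree <= 1 (affine forms in the indeterminates), so that
   every term has degree <= 2.  Polynomial identities over the infinite field R
   are expressed as identities of functions of the (real) indeterminates. *)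
Definition deg2_derivable_from_perm_axioms (P : (pt l -> R) -> R[i]) : Prop :=
  exists (c : pt l -> 'S_l -> R) (a : pt l -> 'S_l -> pt l -> R),
    forall G : pt l -> R,
      P G = ((\sum_(x : pt l) \sum_(s : 'S_l)
               (c x s + \sum_(y : pt l) a x s y * G y) * (G x - G (perm_pt x s)))%:C)%C.

End Defs.

From Pilot Require Import Defs.
From mathcomp Require Import all_boot all_order all_algebra all_fingroup.
From mathcomp Require Import complex.
From mathcomp Require Import reals trigo.
From mathcomp Require Import ring lra.
Set Implicit Arguments. Unset Strict Implicit. Unset Printing Implicit Defensive.
Import Order.TTheory GRing.Theory Num.Theory.
Local Open Scope ring_scope.

(* Expanding squares in the Fourier basis and using the orthogonality of the
   characters, E[f_{i,F}^2] is the Fourier mass of F on the frequencies T whose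
   support is exactly {1, ..., i}, while eta_i is its mass on all frequencies of
   weight i.  For permutation-invariant F the mass on a support set U depends
   only on |U|, and there are C(l, i) sets of size i.
   For the second claim, the difference Q(G) of the two sides is a real
   quadratic form in the values of G that vanishes on every symmetrization
   Sym G, by the first claim.  Hence Q(G) = Q(G) - Q(Sym G) is a combination of
   the differences G(x) - Sym G(x), with coefficients linear in G, and each
   G(x) - Sym G(x) is the average of the axioms G(x) - G(x o s). *)

Lemma sum_prim_rootXM (F : idomainType) (z : F) (n k : nat) :
  n.-primitive_root z -> \sum_(y < n) z ^+ (k * y) = if (n %| k)%N then n%:R else 0.
Proof.
move=> prim_z; under eq_bigr do rewrite exprM.
case: ifP => [n_dvd_k | n_ndvd_k].
  have -> : z ^+ k = 1 by apply/eqP; rewrite -(prim_order_dvd prim_z).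
  by rewrite (eq_bigr (fun=> 1)) ?sumr_const ?card_ord // => y _; rewrite expr1n.
have zk_neq1 : z ^+ k - 1 != 0 by rewrite subr_eq0 -(prim_order_dvd prim_z) n_ndvd_k.
apply/eqP; rewrite -(mulrI_eq0 _ (mulfI zk_neq1)) -subrX1 -exprM mulnC exprM.
by rewrite (prim_expr_order prim_z) expr1n subrr.
Qed.

Lemma cos_lt1 (R : realType) (x : R) : 0 < x < pi *+ 2 -> cos x < 1.
Proof.
move=> x_range; have -> : x = (x / 2) *+ 2 by rewrite -mulr_natr divfK ?pnatr_eq0.
have sin_gt0 : 0 < sin (x / 2) by apply: sin_gt0_pi; move: x_range; rewrite mulr2n; lra.
rewrite cos_mulr2n cos2sin2; have := exprn_gt0 2 sin_gt0; lra.
Qed.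

Lemma cisX (R : realType) (x : R) k :
  (cos x +i* sin x)%C ^+ k = (cos (x *+ k) +i* sin (x *+ k))%C.
Proof.
elim: k => [|k IH]; first by rewrite expr0 mulr0n cos0 sin0.
rewrite exprS IH mulrS cosD sinD.
by apply/eqP; rewrite eq_complex /= eqxx addrC eqxx.
Qed.

Section Omega.
Variables (R : realType) (n : nat).
Local Notation om := (@omega R n).

Lemma omega_prim : (0 < n)%N -> n.-primitive_root om.
Proof.
move=> n_gt0; apply/andP; split=> //; apply/forallP => i; rewrite unity_rootE.
have th_gt0 : 0 < 2 * pi / n%:R :> R.
  by rewrite divr_gt0 ?ltr0n ?mulr_gt0 ?pi_gt0.
have thn : (2 * pi / n%:R) *+ n = pi *+ 2 :> R.
  by rewrite -mulr_natr divfK ?pnatr_eq0 -?lt0n // mulr_natl.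
rewrite /omega cisX; have := ltn_ord i; rewrite leq_eqVlt => /predU1P[-> | lt_in].
  by rewrite thn cos2pi sin2pi !eqxx.
rewrite ltn_eqF // eqbF_neg; apply/eqP => /(congr1 (@complex.Re R)) cos1.
have : cos ((2 * pi / n%:R) *+ i.+1) < 1 :> R.
  apply: cos_lt1; rewrite mulrn_wgt0 ?th_gt0 //= -thn.
  by rewrite ltr_pMn2l.
by rewrite [X in X < _]cos1 ltxx.
Qed.

Lemma omegaJ_mul : om^* * om = 1.
Proof.
rewrite -[om^*]/(om^*%C) /omega; simpc.
by rewrite -!expr2 cos2Dsin2 [sin _ * _]mulrC subrr.
Qed.

End Omega.

(* Indexing by n.+1 makes 'I_n.+1 = Z/nZ a zmodType, so that chi is a
   character of the additive group pt n.+1 m. *)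
Section Characters.
Variables (R : realType) (n m : nat).
Local Notation N := n.+1.
Local Notation om := (@omega R N).
Local Notation chi := (@chi R N m).
Local Notation avg := (@avg R N m).

Let omega_primS : N.-primitive_root om := @omega_prim R N (ltn0Sn n).

Lemma chi0 (X : pt N m) : chi 0 X = 1.
Proof. by apply: big1 => j _; rewrite ffunE mul0n expr0. Qed.

Lemma chiD (T S X : pt N m) : chi (T + S) X = chi T X * chi S X.
Proof.
rewrite /chi -big_split; apply: eq_bigr => j _ /=; rewrite ffunE /=.
by rewrite -(prim_expr_mod omega_primS) modnMml (prim_expr_mod omega_primS) mulnDl exprD.
Qed.

Lemma chiN (T X : pt N m) : chi (- T) X = (chi T X)^*.
Proof.
have chiJ_mul : (chi T X)^* * chi T X = 1.
  rewrite rmorph_prod -big_split big1 // => j _ /=.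
  by rewrite rmorphXn -exprMn omegaJ_mul expr1n.
by rewrite -[RHS]mulr1 -(chi0 X) -(subrr T) chiD mulrA chiJ_mul mul1r.
Qed.

Lemma eq_avg (f g : pt N m -> R[i]) : f =1 g -> avg f = avg g.
Proof. by move=> fg; rewrite /avg (eq_bigr _ (fun X _ => fg X)). Qed.

Lemma avgMl (c : R[i]) (f : pt N m -> R[i]) : avg (fun X => c * f X) = c * avg f.
Proof. by rewrite /avg -mulr_sumr mulrCA. Qed.

Lemma avg_sum (I : finType) (P : pred I) (f : I -> pt N m -> R[i]) :
  avg (fun X => \sum_(k | P k) f k X) = \sum_(k | P k) avg (f k).
Proof. by rewrite /avg exchange_big mulr_sumr. Qed.

Lemma avg_chi (T : pt N m) : avg (chi T) = (T == 0)%:R.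
Proof.
have card_pt : #|{: pt N m}| = (N ^ m)%N by rewrite card_ffun !card_ord.
rewrite /avg card_pt natrX.
have -> : \sum_X chi T X = \prod_j \sum_(y < N) om ^+ (T j * y) by rewrite bigA_distr_bigA.
under eq_bigr do rewrite (sum_prim_rootXM _ omega_primS) /dvdn modn_small //.
have [-> | T_neq0] := eqVneq T 0.
  rewrite (eq_bigr (fun=> N%:R)) => [|j _]; last by rewrite ffunE.
  by rewrite prodr_const card_ord mulVf // expf_neq0 // pnatr_eq0.
have /existsP[j Tj_neq0] : [exists j, T j != 0].
  apply: contraNT T_neq0 => /existsPn T0.
  by apply/eqP/ffunP => j; rewrite ffunE; apply/eqP/negPn/T0.
by rewrite (bigD1 j) //= ifN // mul0r mulr0.
Qed.

Lemma avg_sqr_fourier k (P : pred (pt N k)) (a : pt N k -> R[i]) (g : pt N k -> pt N m) :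
    {in P &, injective g} -> {in P, forall T, P (- T)} -> {in P, {morph g : T / - T}} ->
  avg (fun X => (\sum_(T | P T) a T * chi (g T) X) ^+ 2) = \sum_(T | P T) a T * a (- T).
Proof.
move=> g_inj PN gN.
have sqr_expand X : (\sum_(T | P T) a T * chi (g T) X) ^+ 2 =
    \sum_(T | P T) \sum_(S | P S) a T * a S * chi (g T + g S) X.
  rewrite expr2 mulr_suml; apply: eq_bigr => T _; rewrite mulr_sumr.
  by apply: eq_bigr => S _; rewrite chiD mulrACA.
rewrite (eq_avg sqr_expand) avg_sum; apply: eq_bigr => T PT.
rewrite avg_sum (bigD1 (- T)) ?PN //= avgMl avg_chi gN ?PN // subrr eqxx mulr1.
rewrite big1 ?addr0 // => S /andP[PS S_neq]; rewrite avgMl avg_chi.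
suff /negbTE-> : g T + g S != 0 by rewrite mulr0.
apply: contra S_neq; rewrite addrC addr_eq0 -gN // => /eqP/g_inj-> //; exact: PN.
Qed.

End Characters.

Section Fourier.
Variables (R : realType) (n l : nat).
Local Notation N := n.+1.
Local Notation pt := (pt N).
Implicit Types (F : pt l -> R) (T : pt l).

Definition supp T : {set 'I_l} := [set j | nat_of_ord (T j) != 0%N].

(* By fhatN the summand is |fhat F T|^2. *)
Definition energy F (U : {set 'I_l}) : R[i] :=
  \sum_(T | supp T == U) fhat F T * fhat F (- T).

Lemma suppN T : supp (- T) = supp T.
Proof.
apply/setP => j; rewrite !inE ffunE.
by have := oppr_eq0 (T j); rewrite -!val_eqE => ->.
Qed.

Lemma fhatN F T : fhat F (- T) = (fhat F T)^*.
Proof.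
rewrite /fhat /avg rmorphM fmorphV rmorph_nat rmorph_sum; congr (_ * _).
apply: eq_bigr => Y _; rewrite rmorphM /= chiN conjCK; congr (_ * _).
exact/esym/conjc_real.
Qed.

Lemma eta_fourier F i : eta F i = \sum_(T | wt T == i) fhat F T * fhat F (- T).
Proof.
apply: (avg_sqr_fourier _ (g := id)) => [T S _ _ // | T | T _ //].
by rewrite -[wt (- T)]/#|supp (- T)| suppN.
Qed.

Lemma eta_energy F i : eta F i = \sum_(U : {set 'I_l} | #|U| == i) energy F U.
Proof.
rewrite eta_fourier (partition_big supp (fun U => #|U| == i)) //.
apply: eq_bigr => U /eqP <-; apply: eq_bigl => T.
by apply: andb_idl => /eqP <-.
Qed.

Definition init_set i : {set 'I_l} := [set j : 'I_l | (j < i)%N].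

Definition prefix_pt i (hil : (i <= l)%N) T : pt i := [ffun k => T (widen_ord hil k)].

Lemma fcoefE F i (hil : (i <= l)%N) (x : pt i) :
  fcoef F hil x = \sum_(T | supp T == init_set i) fhat F T * chi R (prefix_pt hil T) x.
Proof.
apply: eq_big => [T | T _].
  apply/forallP/eqP => [T_init | /setP suppT j].
    by apply/setP => j; rewrite !inE (eqP (T_init j)).
  by move: (suppT j); rewrite !inE => ->.
by congr (_ * _); apply: eq_bigr => k _; rewrite ffunE.
Qed.

Lemma avg_fcoef_sqr F i (hil : (i <= l)%N) :
  avg (fun X : pt i => fcoef F hil X ^+ 2) = energy F (init_set i).
Proof.
rewrite (eq_avg (fun X => congr1 (fun y => y ^+ 2) (fcoefE F hil X))).
apply: avg_sqr_fourier => [T1 T2 /eqP suppT1 /eqP suppT2 eq_pre | T | T _].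
- apply/ffunP => j; have [lt_ji | le_ij] := ltnP j i.
    move/ffunP/(_ (Ordinal lt_ji)): eq_pre; rewrite !ffunE.
    by have -> : widen_ord hil (Ordinal lt_ji) = j by apply: val_inj.
  have out_supp T' : supp T' = init_set i -> nat_of_ord (T' j) = 0%N.
    move=> suppT'; have : j \notin supp T' by rewrite suppT' inE -leqNgt.
    by rewrite inE negbK => /eqP.
  by apply: val_inj; rewrite /= (out_supp _ suppT1) (out_supp _ suppT2).
- by rewrite suppN.
- by apply/ffunP => k; rewrite !ffunE.
Qed.

End Fourier.

Lemma card_eq_preimset_perm (T : finType) (A B : {set T}) :
  #|A| = #|B| -> exists s : {perm T}, A = s @^-1: B.
Proof.
(* Induction on |A :\: B|: swapping some a in A :\: B with some b in B :\: A
   decreases it. *)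
move eq_k: #|A :\: B| => k; elim: k A eq_k => [|k IH] A card_AB eq_card.
  suff -> : A = B by exists 1%g; apply/setP => x; rewrite inE perm1.
  by apply/eqP; rewrite eqEcard eq_card leqnn andbT -setD_eq0 -cards_eq0 card_AB.
have [a] : exists a, a \in A :\: B by apply/set0Pn; rewrite -card_gt0 card_AB.
rewrite inE => /andP[aNB aA].
have [b] : exists b, b \in B :\: A.
  by apply/set0Pn; rewrite -card_gt0 cardsD setIC -eq_card -cardsD card_AB.
rewrite inE => /andP[bNA bB].
have card_tA : #|(tperm a b @^-1: A) :\: B| = k.
  have -> : (tperm a b @^-1: A) :\: B = (A :\: B) :\ a.
    apply/setP => x; rewrite !inE; case: tpermP => [-> | -> | /eqP/negbTE-> _] //.
      by rewrite eqxx (negbTE bNA) andbF.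
    by rewrite bB andbF.
  by move: card_AB; rewrite (cardsD1 a) inE aNB aA => -[].
have [s tA_eq] := IH _ card_tA (etrans (card_preimset _ (@perm_inj _ _)) eq_card).
exists (tperm a b * s)%g; apply/setP => x.
by move/setP/(_ (tperm a b x)): tA_eq; rewrite !inE tpermK permM.
Qed.

Section Symmetry.
Variables (R : realType) (n l : nat).
Local Notation N := n.+1.
Local Notation pt := (pt N).
Implicit Types (F : pt l -> R) (x T : pt l) (s t : 'S_l).

Lemma perm_pt1 x : perm_pt x 1 = x.
Proof. by apply/ffunP => j; rewrite ffunE perm1. Qed.

Lemma perm_ptM x s t : perm_pt (perm_pt x s) t = perm_pt x (t * s).
Proof. by apply/ffunP => j; rewrite !ffunE permM. Qed.

Lemma perm_pt_inj s : injective (fun x : pt l => perm_pt x s).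
Proof.
by move=> x y /(congr1 (fun z : pt l => perm_pt z s^-1)); rewrite !perm_ptM mulVg !perm_pt1.
Qed.

Lemma perm_ptN T s : perm_pt (- T) s = - perm_pt T s.
Proof. by apply/ffunP => j; rewrite !ffunE. Qed.

Lemma supp_perm_pt T s : supp (perm_pt T s) = s @^-1: supp T.
Proof. by apply/setP => j; rewrite !inE ffunE. Qed.

Lemma chi_perm_pt T x s : chi R (perm_pt T s) x = chi R T (perm_pt x s^-1).
Proof.
rewrite /chi [RHS](reindex_inj (@perm_inj _ s)) /=.
by apply: eq_bigr => j _; rewrite !ffunE permK.
Qed.

Lemma fhat_perm_pt F T s : perm_invariant F -> fhat F (perm_pt T s) = fhat F T.
Proof.
move=> F_inv; rewrite /fhat /avg (reindex_inj (@perm_pt_inj s)) /=; congr (_ * _).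
by apply: eq_bigr => x _; rewrite chi_perm_pt perm_ptM mulVg perm_pt1 -F_inv.
Qed.

Lemma energy_preimset F (U : {set 'I_l}) s :
  perm_invariant F -> energy F (s @^-1: U) = energy F U.
Proof.
move=> F_inv; rewrite /energy (reindex_inj (@perm_pt_inj s)) /=.
apply: eq_big => [T | T _]; last by rewrite -perm_ptN !fhat_perm_pt.
rewrite supp_perm_pt; apply/eqP/eqP => [/setP eq_pre | -> //].
by apply/setP => j; move: (eq_pre (s^-1 j)%g); rewrite !inE permKV.
Qed.

Lemma avg_fcoef_sqr_eta F i (hil : (i <= l)%N) : perm_invariant F ->
  avg (fun X : pt i => fcoef F hil X ^+ 2) = eta F i / ('C(l, i))%:R.
Proof.
move=> F_inv; rewrite avg_fcoef_sqr eta_energy.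
have card_init : #|init_set l i| = i.
  have widen_inj : injective (widen_ord hil) by move=> a b /(congr1 val) /= /ord_inj.
  rewrite -[RHS](card_ord i) -(card_imset _ widen_inj).
  apply: eq_card => j; rewrite inE.
  apply/idP/imsetP => [j_lt | [k _ ->]]; last exact: (ltn_ord k).
  by exists (Ordinal j_lt) => //; apply: val_inj.
have energy_card (U : {set 'I_l}) : #|U| == i -> energy F U = energy F (init_set l i).
  move=> /eqP card_U; have [s ->] := card_eq_preimset_perm (etrans card_U (esym card_init)).
  exact: energy_preimset.
rewrite (eq_bigr _ energy_card).
rewrite (eq_bigl (fun U => U \in [set U : {set 'I_l} | #|U| == i])) => [|U]; last by rewrite inE.
rewrite sumr_const card_draws card_ord -[X in X / _]mulr_natr mulfK //.
by rewrite pnatr_eq0 -lt0n bin_gt0.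
Qed.

End Symmetry.

Section Derivation.
Variables (R : realType) (n l : nat).
Local Notation N := n.+1.
Local Notation pt := (pt N l).
Implicit Types (G H : pt -> R) (q : pt -> pt -> R[i]).

Definition quad q G : R[i] := \sum_y \sum_z (G y)%:C%C * (G z)%:C%C * q y z.

Definition symmetrize G x : R := (#|'S_l|%:R)^-1 * \sum_(s : 'S_l) G (perm_pt x s).

Lemma symmetrize_invariant G : perm_invariant (symmetrize G).
Proof.
move=> x t; rewrite /symmetrize; congr (_ * _).
rewrite (reindex_inj (mulIg t)) /=.
by apply: eq_bigr => s _; rewrite perm_ptM.
Qed.

Lemma quad_subr q G H : quad q G - quad q H =
  \sum_y (G y - H y)%:C%C *
    (\sum_z (G z)%:C%C * q y z + \sum_z (H z)%:C%C * q z y).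
Proof.
rewrite /quad -sumrB.
transitivity (\sum_y \sum_z ((G y - H y)%:C%C * ((G z)%:C%C * q y z)
                          + (G z - H z)%:C%C * ((H y)%:C%C * q y z))).
  apply: eq_bigr => y _; rewrite -sumrB; apply: eq_bigr => z _; rewrite !rmorphB /=.
  by move: (G y)%:C%C (G z)%:C%C (H y)%:C%C (H z)%:C%C (q y z) => a b c d e; ring.
under eq_bigr do rewrite big_split /=.
rewrite big_split /= [X in _ + X]exchange_big -big_split /=.
by apply: eq_bigr => y _; rewrite mulrDr !mulr_sumr.
Qed.

Lemma sub_symmetrize G x :
  G x - symmetrize G x = (#|'S_l|%:R)^-1 * \sum_(s : 'S_l) (G x - G (perm_pt x s)).
Proof.
have k_neq0 : #|'S_l|%:R != 0 :> R by rewrite pnatr_eq0 -lt0n; apply/card_gt0P; exists 1%g.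
rewrite sumrB sumr_const mulrBr; congr (_ - _).
by rewrite -[G x *+ _]mulr_natr mulrCA mulVf ?mulr1.
Qed.

Lemma sum_symmetrize_mul G (f : pt -> R[i]) :
  \sum_w (symmetrize G w)%:C%C * f w =
  \sum_v (G v)%:C%C * ((#|'S_l|%:R)^-1 * \sum_(t : 'S_l) f (perm_pt v t^-1%g)).
Proof.
transitivity ((#|'S_l|%:R)^-1 * \sum_(t : 'S_l) \sum_w (G (perm_pt w t))%:C%C * f w).
  rewrite exchange_big mulr_sumr; apply: eq_bigr => w _.
  by rewrite /symmetrize rmorphM fmorphV rmorph_nat rmorph_sum -mulrA mulr_suml.
have reindex_perm t : \sum_w (G (perm_pt w t))%:C%C * f w =
    \sum_v (G v)%:C%C * f (perm_pt v t^-1%g).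
  rewrite (reindex_inj (@perm_pt_inj _ _ t^-1%g)) /=.
  by apply: eq_bigr => v _; rewrite perm_ptM mulgV perm_pt1.
under eq_bigr do rewrite reindex_perm.
rewrite exchange_big mulr_sumr; apply: eq_bigr => v _.
by rewrite -mulr_sumr mulrCA.
Qed.

Lemma quad_perm_ideal q : (forall G, quad q (symmetrize G) = 0) ->
  exists beta : pt -> pt -> R[i], forall G, quad q G =
    \sum_x \sum_(s : 'S_l) (G x - G (perm_pt x s))%:C%C * \sum_v beta x v * (G v)%:C%C.
Proof.
move=> q_sym0; pose c : R[i] := (#|'S_l|%:R)^-1.
exists (fun x v => c * (q x v + c * \sum_(t : 'S_l) q (perm_pt v t^-1%g) x)) => G.
rewrite -[LHS]subr0 -[X in _ - X](q_sym0 G) quad_subr; apply: eq_bigr => x _.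
rewrite sum_symmetrize_mul -big_split /= sub_symmetrize rmorphM fmorphV rmorph_nat.
rewrite rmorph_sum -/c -mulrA mulr_suml mulr_sumr; apply: eq_bigr => s _.
rewrite mulrCA; congr (_ * _); rewrite mulr_sumr; apply: eq_bigr => v _.
by rewrite -mulrDr mulrCA mulrC.
Qed.

Lemma Re_sum (I : finType) (P : pred I) (f : I -> R[i]) :
  complex.Re (\sum_(k | P k) f k) = \sum_(k | P k) complex.Re (f k).
Proof. exact: raddf_sum. Qed.

Lemma Re_real_complexM (x : R) (w : R[i]) : complex.Re (x%:C%C * w) = x * complex.Re w.
Proof. by case: w => a b /=; rewrite mul0r subr0. Qed.

Lemma deg2_derivable_quad (P : (pt -> R) -> R[i]) q :
    P =1 quad q -> (forall G, P G \is Num.real) -> (forall G, P (symmetrize G) = 0) ->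
  deg2_derivable_from_perm_axioms P.
Proof.
move=> Pq P_real P_sym0.
have /quad_perm_ideal[beta quadE] : forall G, quad q (symmetrize G) = 0.
  by move=> G; rewrite -Pq.
(* [P G] is real, so only the real parts of the coefficients [beta] matter. *)
exists (fun _ _ => 0), (fun x _ v => complex.Re (beta x v)) => G.
rewrite -[LHS]RRe_real // Pq quadE; congr (_%:C)%C.
rewrite Re_sum; apply: eq_bigr => x _; rewrite Re_sum; apply: eq_bigr => s _.
rewrite Re_real_complexM add0r mulrC Re_sum; congr (_ * _).
by apply: eq_bigr => v _; rewrite mulrC Re_real_complexM mulrC.
Qed.

Lemma fhat_pair_quad (c : pt -> R[i]) :
  exists q, forall G, \sum_T c T * (fhat G T * fhat G (- T)) = quad q G.
Proof.
pose w (T y : pt) : R[i] := (#|{: pt}|%:R)^-1 * (chi R T y)^*.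
have fhatE G T : fhat G T = \sum_y (G y)%:C%C * w T y.
  by rewrite /fhat /avg mulr_sumr; apply: eq_bigr => y _; rewrite mulrCA.
exists (fun y z => \sum_T c T * (w T y * w (- T) z)) => G.
have pairE T : fhat G T * fhat G (- T) =
    \sum_y \sum_z (G y)%:C%C * (G z)%:C%C * (w T y * w (- T) z).
  rewrite !fhatE mulr_suml; apply: eq_bigr => y _; rewrite mulr_sumr.
  by apply: eq_bigr => z _; rewrite mulrACA.
under eq_bigr => T _ do rewrite pairE mulr_sumr.
under eq_bigr => T _ do under eq_bigr => y _ do rewrite mulr_sumr.
rewrite exchange_big; apply: eq_bigr => y _; rewrite exchange_big.
apply: eq_bigr => z _; rewrite mulr_sumr; apply: eq_bigr => T _.
by rewrite mulrCA.
Qed.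

Lemma fhat_pair_sum_real (c : pt -> R[i]) G :
  (forall T, c T \is Num.real) -> \sum_T c T * (fhat G T * fhat G (- T)) \is Num.real.
Proof.
move=> c_real; apply: rpred_sum => T _; apply: rpredM => //.
by rewrite fhatN ger0_real // mul_conjC_ge0.
Qed.

Lemma avg_fcoef_sqr_sub_eta G i (hil : (i <= l)%N) :
  avg (fun X : Defs.pt N i => fcoef G hil X ^+ 2) - eta G i / ('C(l, i))%:R =
  \sum_T ((supp T == init_set l i)%:R - (wt T == i)%:R / ('C(l, i))%:R) *
          (fhat G T * fhat G (- T)).
Proof.
rewrite avg_fcoef_sqr eta_fourier /energy mulr_suml.
under [RHS]eq_bigr do rewrite mulrBl; rewrite sumrB.
by congr (_ - _); rewrite big_mkcond; apply: eq_bigr => T _;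
  case: ifP => _ /=; rewrite ?mul1r ?mul0r // mulrC.
Qed.

End Derivation.

Theorem lemmaC11 (R : realType) (n l : nat) (hn : (0 < n)%N)
    (F : pt n l -> R) (hF : perm_invariant F)
    (i : nat) (hi1 : (1 <= i)%N) (hil : (i <= l)%N) :
  avg (fun X : pt n i => (fcoef F hil X) ^+ 2) = eta F i / ('C(l, i))%:R
  /\ deg2_derivable_from_perm_axioms
       (fun G : pt n l -> R =>
          avg (fun X : pt n i => (fcoef G hil X) ^+ 2) - eta G i / ('C(l, i))%:R).
Proof.
case: n hn F hF => // n _ F hF.
split; first exact: avg_fcoef_sqr_eta.
pose c (T : pt n.+1 l) : R[i] := (supp T == init_set l i)%:R - (wt T == i)%:R / ('C(l, i))%:R.
have [q qE] := fhat_pair_quad c.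
apply: (deg2_derivable_quad (q := q)) => G.
- by rewrite avg_fcoef_sqr_sub_eta qE.
- rewrite avg_fcoef_sqr_sub_eta fhat_pair_sum_real // => T.
  by rewrite rpredB ?rpred_div ?rpred_nat.
- by rewrite avg_fcoef_sqr_eta ?subrr //; exact: symmetrize_invariant.
Qed.
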